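(* Let $G$ be a finite group. The graph $\mathcal{P}^*(G)/\mathtt{O}$ is a tame quotient of $\mathcal{P}^*(G)$ if and only if, for all $x,y\in G\setminus\{1\}$, $x\mathtt{O}y$ implies $x=y$.
   Context: The power graph $\mathcal{P}(G)$ has vertex set $G$, distinct $x,y$ adjacent iff one is a positive integer power of the other; $\mathcal{P}^*(G)$ is its subgraph induced on $G\setminus\{1\}$. $x\mathtt{O}y$ ($x,y$ open twins) iff $x$ and $y$ have the same open neighbourhood (set of neighbours excluding the vertex itself). For a graph $\Gamma$ and equivalence $\sim$ on its vertices, $\Gamma/\sim$ has vertex set the classes, classes joined iff some representatives are joined; the quotient is tame if $[x]=[y]$ implies $x$ and $y$ are joined by a path in $\Gamma$. *)

From Stdlib Require Import Relations.
From mathcomp Require Import all_boot all_fingroup.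
Set Implicit Arguments. Unset Strict Implicit. Unset Printing Implicit Defensive.
Local Open Scope group_scope.

Section PowerGraph.
Variable gT : finGroupType.

Definition is_pow (x y : gT) : Prop := exists n : nat, (0 < n)%N /\ y = x ^+ n.

Definition power_adj (x y : gT) : Prop := x <> y /\ (is_pow x y \/ is_pow y x).

Definition pstar_adj (x y : gT) : Prop := x <> 1 /\ y <> 1 /\ power_adj x y.

Definition open_nbhd (x : gT) : gT -> Prop := fun z => pstar_adj x z.

(* x O y : same open neighbourhood in P*(G) *)
Definition open_twins (x y : gT) : Prop := forall z : gT, open_nbhd x z <-> open_nbhd y z.

Definition pstar_connected (x y : gT) : Prop := clos_refl_trans gT pstar_adj x y.

Definition pstar_O_tame : Prop :=
  forall x y : gT, x <> 1 -> y <> 1 -> open_twins x y -> pstar_connected x y.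
End PowerGraph.

(* If x O y with x <> y, then x and y are not adjacent (y would be its own
   neighbour), so neither is a power of the other.  A path from x to y gives
   x a neighbour, and a twin with a neighbour equals its twin:  If x^-1 <> x, then x^-1 is a
   neighbour of x, hence of y, so y is comparable with x^-1 and therefore
   with x.  If x and y are both involutions with a common neighbour z, both
   lie in the cyclic group <z>, which has only one subgroup of order 2. *)

From mathcomp Require Import all_boot all_fingroup.
From mathcomp Require Import cyclic.
From Stdlib Require Import Relations.
Set Implicit Arguments. Unset Strict Implicit. Unset Printing Implicit Defensive.
Local Open Scope group_scope.

Section PowerGraphTwins.
Variable gT : finGroupType.
Implicit Types x y z : gT.

Lemma open_twins_sym x y : open_twins x y -> open_twins y x.
Proof. by move=> tw z; split; apply tw. Qed.

Lemma is_pow_cycle x y : is_pow x y -> y \in <[x]>.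
Proof. by move=> [n [_ ->]]; apply: mem_cycle. Qed.

Lemma pstar_adj_cycle x z : pstar_adj x z -> (z \in <[x]>) || (x \in <[z]>).
Proof. by move=> [_ [_ [_ [/is_pow_cycle -> | /is_pow_cycle ->]]]]; rewrite ?orbT. Qed.

Lemma pstar_adj_of_cycle x y :
  x <> 1 -> y <> 1 -> x <> y -> y \in <[x]> -> pstar_adj x y.
Proof.
move=> x1 y1 nxy /cycleP [[|n] yE]; first by case: y1; rewrite yE.
by do 3 (split=> //); left; exists n.+1.
Qed.

Lemma open_twins_nadj x y : open_twins x y -> ~ pstar_adj x y.
Proof. by move=> tw /tw [_ [_ []]]. Qed.

Lemma open_twins_cycle_eq x y :
  x <> 1 -> y <> 1 -> open_twins x y -> y \in <[x]> -> x = y.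
Proof.
move=> x1 y1 tw yx; case: (eqVneq x y) => [// | /eqP nxy].
by case: (open_twins_nadj tw); apply: pstar_adj_of_cycle.
Qed.

Lemma open_twins_comparable_eq x y : x <> 1 -> y <> 1 -> open_twins x y ->
  (y \in <[x]>) || (x \in <[y]>) -> x = y.
Proof.
move=> x1 y1 tw /orP [yx | xy]; first exact: open_twins_cycle_eq.
by symmetry; apply: open_twins_cycle_eq => //; apply: open_twins_sym.
Qed.

Lemma open_twins_eq_of_invg_neq x y :
  x <> 1 -> y <> 1 -> open_twins x y -> x^-1 <> x -> x = y.
Proof.
move=> x1 y1 tw xVx.
have xV1 : x^-1 <> 1 by move/eqP; rewrite invg_eq1 => /eqP.
have /tw /pstar_adj_cycle : pstar_adj x x^-1.
  by apply: pstar_adj_of_cycle => //; [move/esym | rewrite groupV cycle_id].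
by rewrite cycleV groupV orbC; apply: open_twins_comparable_eq.
Qed.

Lemma involution_expg2 x : x^-1 = x -> x ^+ 2 = 1.
Proof. by move=> xVx; rewrite expgS expg1 -{1}xVx mulVg. Qed.

Lemma involution_order x : x <> 1 -> x^-1 = x -> #[x] = 2%N.
Proof.
move=> x1 /involution_expg2/eqP x2; apply/prime_nt_dvdP => //.
- by rewrite order_eq1; apply/eqP.
- by rewrite order_dvdn.
Qed.

Lemma involution_adj_cycle x z : x^-1 = x -> pstar_adj x z -> x \in <[z]>.
Proof.
move=> xVx [_ [z1 [nxz [[n [_ zE]] | /is_pow_cycle //]]]].
move: zE; rewrite -(expg_mod n (involution_expg2 xVx)) modn2.
by case: (odd n) => zE; [case: nxz | case: z1].
Qed.

Lemma open_twins_eq_of_involutions x y z : x <> 1 -> y <> 1 -> open_twins x y ->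
  x^-1 = x -> y^-1 = y -> pstar_adj x z -> x = y.
Proof.
move=> x1 y1 tw xVx yVy xz.
have xzc := involution_adj_cycle xVx xz.
have yzc := involution_adj_cycle yVy (proj1 (tw z) xz).
have /eqP xy : <[x]> == <[y]> :> {set gT}.
  rewrite (eq_subG_cyclic (cycle_cyclic z)) ?cycle_subG //.
  by rewrite -!orderE involution_order ?involution_order.
by apply: open_twins_cycle_eq => //; rewrite xy cycle_id.
Qed.

Lemma open_twins_eq_of_adj x y z :
  x <> 1 -> y <> 1 -> open_twins x y -> pstar_adj x z -> x = y.
Proof.
move=> x1 y1 tw xz.
have [xVx | /eqP xVx] := eqVneq x^-1 x; last exact: open_twins_eq_of_invg_neq.
have [yVy | /eqP yVy] := eqVneq y^-1 y.
  exact: open_twins_eq_of_involutions xVx yVy xz.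
by symmetry; apply: open_twins_eq_of_invg_neq => //; apply: open_twins_sym.
Qed.

Lemma pstar_connected_eq_or_adj x y :
  pstar_connected x y -> x = y \/ exists z, pstar_adj x z.
Proof.
move=> /clos_rt_rt1n_iff; case=> [|z w xz _]; first by left.
by right; exists z.
Qed.

End PowerGraphTwins.

Theorem mainTheorem19 (gT : finGroupType) :
  pstar_O_tame gT <->
  (forall x y : gT, x <> 1 -> y <> 1 -> open_twins x y -> x = y).
Proof.
split=> [tame x y x1 y1 tw | twins_eq x y x1 y1 tw].
  have [// | [z xz]] := pstar_connected_eq_or_adj (tame x y x1 y1 tw).
  exact: open_twins_eq_of_adj xz.
by rewrite (twins_eq x y x1 y1 tw); apply: rt_refl.
Qed.
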